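(* Let $b>1$ be an integer and let $\mathcal{A}$ be a minimal complete deterministic automaton over $A_b=\{0,\ldots,b-1\}$. Let $\ell+1$ be the number of states of $\mathcal{A}$ that belong to $0$-circuits. Then $\mathcal{A}$ accepts by value an impurely periodic set of integers if and only if the following three conditions hold: (a) there exists a pseudo-morphism $\phi:\mathcal{A}\to\mathcal{A}_{?,\ell}$ (this condition is understood to fail if $\ell=0$, since $\mathcal{A}_{?,0}$ is not defined); (b) for all states $s,s'$ of $\mathcal{A}$ distinct from the initial state, if $\phi(s)=\phi(s')$ then $s$ and $s'$ are ultimately-equivalent; (c) the initial state bears a self-loop labelled by the digit $0$ and has no other incoming transitions.
   Context: For $u=u_\ell\cdots u_0\in A_b^*$, $\mathrm{val}(u)=\sum_i u_i b^i$. An automaton accepts by value a set $X\subseteq\mathbb{N}$ if for every word $u$, $u$ is accepted iff $\mathrm{val}(u)\in X$. A set $P\subseteq\mathbb{N}$ is purely periodic if $P=R+p\mathbb{N}$ for some $p\ge1$ and $R\subseteq\{0,\ldots,p-1\}$; a set is eventually periodic if there exist $p\ge1$, $N\ge0$ with $x\in X\iff x+p\in X$ for all $x\ge N$; it is impurely periodic if it is eventually periodic but not purely periodic. $s\cdot u$ denotes the state reached from $s$ by reading $u$. A $0$-circuit is a circuit all of whose transitions are labelled $0$. For $q\ge1$, $\mathcal{A}_{?,q}$ is the complete deterministic automaton over $A_b$ with states $\{0,\ldots,q-1\}$, initial state $0$, transitions $n\xrightarrow{a}(nb+a)\bmod q$, and no specified final states. A pseudo-morphism $\mathcal{A}\to\mathcal{M}$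 between complete deterministic automata is a map $\phi$ on states sending initial state to initial state with $\phi(s\cdot a)=\phi(s)\cdot a$ for all states $s$ and letters $a$. Two states $s,s'$ are ultimately-equivalent if there is $m\ge1$ with $s\cdot u=s'\cdot u$ for all words $u$ with $|u|\ge m$. *)

From mathcomp Require Import all_boot.
Set Implicit Arguments. Unset Strict Implicit. Unset Printing Implicit Defensive.

Section Automata.
Variables (b : nat) (Q : finType) (delta : Q -> 'I_b -> Q).

Definition run (s : Q) (u : seq 'I_b) : Q := foldl delta s u.

(* val(u_l ... u_0) = sum u_i b^i, most significant digit read first *)
Definition val (u : seq 'I_b) : nat := foldl (fun n (a : 'I_b) => n * b + a) 0 u.

Definition accepted (q0 : Q) (F : pred Q) (u : seq 'I_b) : Prop := F (run q0 u).

Definition accepts_by_value (q0 : Q) (F : pred Q) (X : nat -> Prop) : Prop :=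
  forall u : seq 'I_b, accepted q0 F u <-> X (val u).

Definition minimal_dfa (q0 : Q) (F : pred Q) : Prop :=
  (forall s : Q, exists u : seq 'I_b, run q0 u = s) /\
  (forall s s' : Q, s <> s' -> exists u : seq 'I_b, F (run s u) <> F (run s' u)).

Definition on_zero_circuit (z : 'I_b) (s : Q) : Prop :=
  exists k : nat, 0 < k /\ iter k (fun t => delta t z) s = s.

(* pseudo-morphism A -> A_{?,q}, states of A_{?,q} being 'I_q *)
Definition pseudo_morphism (q0 : Q) (q : nat) (phi : Q -> 'I_q) : Prop :=
  nat_of_ord (phi q0) = 0 /\
  forall (s : Q) (a : 'I_b), nat_of_ord (phi (delta s a)) = (phi s * b + a) %% q.

Definition ultimately_equivalent (s s' : Q) : Prop :=
  exists m : nat, 0 < m /\ forall u : seq 'I_b, m <= size u -> run s u = run s' u.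

End Automata.

Definition purely_periodic (X : nat -> Prop) : Prop :=
  exists (p : nat) (R : nat -> Prop), 1 <= p /\ (forall r, R r -> r < p) /\
    forall x, X x <-> exists r k, R r /\ x = r + p * k.

Definition eventually_periodic (X : nat -> Prop) : Prop :=
  exists p N : nat, 1 <= p /\ forall x, N <= x -> (X x <-> X (x + p)).

Definition impurely_periodic (X : nat -> Prop) : Prop :=
  eventually_periodic X /\ ~ purely_periodic X.

(* Since [q0] carries a 0-loop and is entered by no other transition, the
   state reached on a word depends only on its value, and is [q0] only for the
   value 0. Given moreover a pseudo-morphism [phi] to A_{?,l} whose fibres
   outside [q0] are ultimately equivalent, a uniform bound [M] for these
   ultimate equivalences shows that adding [l * b ^ M] preserves membership
   above [b ^ M]; a pure period [p] would make the state of value [p]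
   equivalent to [q0].
   Conversely, for an impurely periodic set accepted by a minimal automaton,
   let [k] be the least [c] such that [c * b ^ J] is an eventual period for
   some [J]. Then [k] is coprime to [b], positive values leading to the same
   state are congruent mod [k], and congruent positive values lead to
   ultimately equivalent states; so "value mod [k]" is a pseudo-morphism with
   the required fibres. Reading zeros from a value [r + k] ends on a 0-circuit
   in a state of residue [r] (Euler's theorem), and distinct states on
   0-circuits are never ultimately equivalent, so 0-circuits carry exactly
   [k + 1] states. *)

From Pilot Require Import Defs.
From mathcomp Require Import all_boot zify.
From mathcomp Require Import cyclic.
From Stdlib Require Import Classical Wf_nat.
Set Implicit Arguments. Unset Strict Implicit. Unset Printing Implicit Defensive.

Section Digits.
Variable b : nat.
Local Notation val := (@Defs.val b).

Lemma val_rcons u (a : 'I_b) : val (rcons u a) = val u * b + a.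
Proof. by rewrite /Defs.val foldl_rcons. Qed.

Lemma val_cat u w : val (u ++ w) = val u * b ^ size w + val w.
Proof.
elim/last_ind: w => [|w a IHw]; first by rewrite cats0 expn0 muln1 addn0.
by rewrite -rcons_cat !val_rcons IHw size_rcons expnS; lia.
Qed.

Lemma val_nseq0 (a : 'I_b) n : a = 0 :> nat -> val (nseq n a) = 0.
Proof.
move=> a0; elim: n => [|n IHn] //.
by rewrite -[nseq _ _]/([:: a] ++ nseq n a) val_cat IHn addn0 /Defs.val /= a0.
Qed.

Hypothesis b_gt1 : 1 < b.

Lemma exists_word_of_size j n : n < b ^ j -> exists w, size w = j /\ val w = n.
Proof.
elim: j n => [|j IHj] n n_lt; first by exists [::]; move: n_lt; rewrite expn0; case: n.
have b_gt0 : 0 < b by lia.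
have [w [<- val_w]] : exists w, size w = j /\ val w = n %/ b.
  by apply: IHj; rewrite ltn_divLR // -expnSr.
exists (rcons w (Ordinal (ltn_pmod n b_gt0))).
by rewrite size_rcons val_rcons val_w -divn_eq.
Qed.

Lemma val_rcons_eq0 u (a : 'I_b) : val (rcons u a) = 0 -> val u = 0 /\ a = 0 :> nat.
Proof.
rewrite val_rcons => /eqP; rewrite addn_eq0 muln_eq0 [b == 0]eqn0Ngt (ltnW b_gt1) orbF.
by case/andP => /eqP -> /eqP ->.
Qed.

Lemma exists_word n : exists w, val w = n.
Proof. by have [w [_ val_w]] := exists_word_of_size (ltn_expl n b_gt1); exists w. Qed.

End Digits.

Section Periodicity.
Variable X : nat -> Prop.

Definition periodic_from (p N : nat) := forall x, N <= x -> (X x <-> X (x + p)).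

Lemma periodic_fromM p N t : periodic_from p N -> periodic_from (p * t) N.
Proof.
move=> per; elim: t => [|t IHt] x le_Nx; first by rewrite muln0 addn0.
rewrite mulnS addnA (IHt x le_Nx) -addnA [p + _]addnC addnA; apply: per; lia.
Qed.

Lemma periodic_from_le p N N' : N <= N' -> periodic_from p N -> periodic_from p N'.
Proof. by move=> le_NN' per x le_N'x; apply: per; lia. Qed.

Lemma periodic_from_gcd p q N :
  0 < p -> periodic_from p N -> periodic_from q N -> periodic_from (gcdn p q) N.
Proof.
move=> p_gt0 per_p per_q x le_Nx.
have [a _ /dvdnP [c Bezout]] := Bezoutl q p_gt0.
rewrite (periodic_fromM a per_q (x := x + gcdn p q)); last first.
  exact: leq_trans le_Nx (leq_addr _ _).
have -> : x + gcdn p q + q * a = x + p * c by move: Bezout; nia.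
by rewrite -(periodic_fromM c per_p).
Qed.

Lemma purely_periodicP :
  purely_periodic X <-> exists2 p, 0 < p & periodic_from p 0.
Proof.
split=> [[p [R [p_gt0 [R_lt X_R]]]]|[p p_gt0 per]].
  exists p => // x _; rewrite !X_R; split=> [[r [k [Rr ->]]]|[r [k [Rr x_eq]]]].
    by exists r, k.+1; split=> //; rewrite mulnS; lia.
  have := R_lt r Rr; case: k x_eq => [|k] x_eq; first lia.
  by exists r, k; split=> //; move: x_eq; rewrite mulnS; lia.
exists p, (fun r => r < p /\ X r); do 2!split=> //; first by move=> r [].
move=> x; have X_mod y t : X y <-> X (y + p * t) by apply: (periodic_fromM t per).
have x_eq : x = x %% p + p * (x %/ p) by rewrite mulnC addnC -divn_eq.
split=> [Xx|[r [k [[_ Xr] ->]]]]; last exact: (X_mod r k).1 Xr.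
exists (x %% p), (x %/ p); rewrite ltn_pmod //; do 2!split=> //.
by apply/(X_mod _ (x %/ p)); rewrite -x_eq.
Qed.

End Periodicity.

Lemma uniform_bound (T : finType) (P : T -> nat -> Prop) :
  (forall t m m', m <= m' -> P t m -> P t m') -> (forall t, exists m, P t m) ->
  exists M, forall t, P t M.
Proof.
move=> P_mono P_ex.
suff [M PM] : exists M, forall t, t \in enum T -> P t M.
  by exists M => t; apply: PM; rewrite mem_enum.
elim: (enum T) => [|t r [M PM]]; first by exists 0.
have [m Ptm] := P_ex t; exists (maxn m M) => t'; rewrite inE => /orP [/eqP ->|/PM].
  by apply: P_mono Ptm; apply: leq_maxl.
by apply: P_mono; apply: leq_maxr.
Qed.

Lemma iter_reaches_cycle (T : finType) (f : T -> T) s :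
  exists i0, forall E, i0 <= E -> exists2 c, 0 < c & iter c f (iter E f s) = iter E f s.
Proof.
have /trajectP [i lt_i_ord iter_ord] := looping_order f s.
have cyc_i : iter (order f s - i) f (iter i f s) = iter i f s.
  by rewrite -iterD (subnK (ltnW lt_i_ord)).
exists i => E le_iE; exists (order f s - i); first by rewrite subn_gt0.
by rewrite -(subnK le_iE) iterD -iterD addnC iterD cyc_i.
Qed.

Section Automaton.
Variables (b : nat) (b_gt1 : 1 < b) (Q : finType) (delta : Q -> 'I_b -> Q).
Local Notation val := (@Defs.val b).
Local Notation run := (Defs.run delta).
Local Notation zero := (Ordinal (ltnW b_gt1)).

Lemma run_cat s u w : run s (u ++ w) = run (run s u) w.
Proof. by rewrite /Defs.run foldl_cat. Qed.

Lemma run_rcons s u a : run s (rcons u a) = delta (run s u) a.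
Proof. by rewrite /Defs.run foldl_rcons. Qed.

Lemma run_nseq s n a : run s (nseq n a) = iter n (delta^~ a) s.
Proof. by elim: n s => [|n IHn] s //; rewrite iterSr -IHn. Qed.

Lemma ultimately_equivalent_zero_circuit s s' :
  on_zero_circuit delta zero s -> on_zero_circuit delta zero s' ->
  ultimately_equivalent delta s s' -> s = s'.
Proof.
move=> [c [c_gt0 cyc]] [c' [c'_gt0 cyc']] [m [_ ue]].
have iter_cyc t d n : iter d (delta^~ zero) t = t -> iter (d * n) (delta^~ zero) t = t.
  by move=> cyc_t; elim: n => [|n IHn]; rewrite ?muln0 // mulnS iterD IHn cyc_t.
rewrite -(iter_cyc s c (c' * m)) // -(iter_cyc s' c' (c * m)) //.
rewrite mulnCA -!run_nseq; apply: ue; rewrite size_nseq mulnA.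
by rewrite leq_pmull // muln_gt0 c_gt0 c'_gt0.
Qed.

Variables (q0 : Q) (F : pred Q).

Lemma minimal_dfa_eq s s' : minimal_dfa delta q0 F ->
  (forall w, F (run s w) <-> F (run s' w)) -> s = s'.
Proof.
move=> [_ inequiv] same; case: (s =P s') => // /inequiv [w]; case.
by apply/idP/idP => /same.
Qed.

Lemma accepts_by_value_run_cat X u w : accepts_by_value delta q0 F X ->
  F (run (run q0 u) w) <-> X (val u * b ^ size w + val w).
Proof. by move=> acc; rewrite -run_cat -val_cat; apply: acc. Qed.

Section ZeroLoop.
Hypothesis zero_loop : delta q0 zero = q0.

Lemma run_val0 u : val u = 0 -> run q0 u = q0.
Proof.
elim/last_ind: u => [|u a IHu] //; rewrite run_rcons.
by case/(val_rcons_eq0 b_gt1) => /IHu -> a0; rewrite (_ : a = zero) //; apply: val_inj.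
Qed.

Lemma run_val_eq u v : val u = val v -> run q0 u = run q0 v.
Proof.
elim/last_ind: u v => [|u a IHu] v; first by move/esym/run_val0 ->.
case/lastP: v => [|v a']; first exact: run_val0.
rewrite !val_rcons !run_rcons => val_eq.
have b_gt0 : 0 < b by apply: ltnW.
have /val_inj -> : nat_of_ord a = a'.
  by have := congr1 (modn^~ b) val_eq; rewrite /= !modnMDl !modn_small.
rewrite (IHu v) //; have := congr1 (divn^~ b) val_eq.
by rewrite /= !divnMDl // !divn_small // !addn0.
Qed.

Lemma run_neq_q0_val_gt0 u : run q0 u <> q0 -> 0 < val u.
Proof. by rewrite lt0n => ne; apply/eqP => /run_val0. Qed.

Definition accepted_values n := exists u, val u = n /\ F (run q0 u).

Lemma accepts_accepted_values : accepts_by_value delta q0 F accepted_values.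
Proof.
move=> u; split=> [Fu|[v [val_vu Fv]]]; first by exists u.
by rewrite /accepted (run_val_eq val_vu) in Fv.
Qed.

End ZeroLoop.

Hypothesis no_incoming : forall s a, delta s a = q0 -> s = q0 /\ a = zero.

Lemma run_q0_val0 u : run q0 u = q0 -> val u = 0.
Proof.
elim/last_ind: u => [|u a IHu] //; rewrite val_rcons run_rcons.
by case/no_incoming => /IHu -> ->.
Qed.

Lemma run_neq_q0 u : 0 < val u -> run q0 u <> q0.
Proof. by move=> val_gt0 /run_q0_val0; lia. Qed.

End Automaton.

Section Sufficiency.
Variables (b : nat) (b_gt1 : 1 < b) (Q : finType) (delta : Q -> 'I_b -> Q).
Variables (q0 : Q) (F : pred Q) (X : nat -> Prop).
Local Notation val := (@Defs.val b).
Local Notation run := (Defs.run delta).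
Local Notation zero := (Ordinal (ltnW b_gt1)).
Hypothesis accepts : accepts_by_value delta q0 F X.
Hypothesis no_incoming : forall s a, delta s a = q0 -> s = q0 /\ a = zero.

Lemma not_purely_periodic : minimal_dfa delta q0 F -> ~ purely_periodic X.
Proof.
move=> minimal /purely_periodicP [p p_gt0 per].
have [u val_u] := exists_word b_gt1 p.
apply: (run_neq_q0 no_incoming (u := u)); first by rewrite val_u.
apply: (minimal_dfa_eq minimal) => w.
apply: iff_trans (accepts_by_value_run_cat _ _ accepts) (iff_sym _).
apply: iff_trans (accepts w) _; rewrite val_u addnC.
exact: (periodic_fromM _ per (leq0n _)).
Qed.

Variables (l : nat) (phi : Q -> 'I_l).
Hypothesis morphism : pseudo_morphism delta q0 phi.
Hypothesis fibres_ultimately_equivalent : forall s s', s <> q0 -> s' <> q0 ->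
  phi s = phi s' -> ultimately_equivalent delta s s'.

Lemma pseudo_morphism_run u : phi (run q0 u) = val u %% l :> nat.
Proof.
elim/last_ind: u => [|u a IHu]; first by rewrite mod0n morphism.1.
by rewrite run_rcons val_rcons morphism.2 IHu -modnDml modnMml modnDml.
Qed.

Lemma ultimately_equivalent_uniform : exists M, forall s s', s <> q0 -> s' <> q0 ->
  phi s = phi s' -> forall w, M <= size w -> run s w = run s' w.
Proof.
pose P (t : Q * Q) M := t.1 <> q0 -> t.2 <> q0 -> phi t.1 = phi t.2 ->
  forall w, M <= size w -> run t.1 w = run t.2 w.
have [|[s s']|M PM] := @uniform_bound _ P; last by exists M => s s'; apply: (PM (s, s')).
  move=> t m m' le_mm' Ptm ne ne' eq_phi w le_m'w.
  by apply: Ptm => //; apply: leq_trans le_m'w.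
rewrite /P /=; case: (s =P q0) => [|ne]; first by exists 0.
case: (s' =P q0) => [|ne']; first by exists 0.
case: (phi s =P phi s') => [eq_phi|]; last by exists 0.
by have [m [_ ue]] := fibres_ultimately_equivalent ne ne' eq_phi; exists m.
Qed.

(* Above [b ^ M], adding [l * b ^ M] only changes the high digits, and leads to
   a state with the same image under [phi]. *)
Lemma eventually_periodic_of_pseudo_morphism : eventually_periodic X.
Proof.
have l_gt0 : 0 < l by case: (phi q0) => i; case: l i.
have bM_gt0 M : 0 < b ^ M by rewrite expn_gt0 ltnW.
have [M uniform] := ultimately_equivalent_uniform.
exists (l * b ^ M), (b ^ M); split; first by rewrite muln_gt0 l_gt0 bM_gt0.
move=> x le_x.
have [w [size_w val_w]] := exists_word_of_size b_gt1 (ltn_pmod x (bM_gt0 M)).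
have [u val_u] := exists_word b_gt1 (x %/ b ^ M).
have [v val_v] := exists_word b_gt1 (x %/ b ^ M + l).
have hi_gt0 : 0 < x %/ b ^ M by rewrite divn_gt0.
have x_eq : x = val (u ++ w) by rewrite val_cat size_w val_u val_w -divn_eq.
have xl_eq : x + l * b ^ M = val (v ++ w).
  by rewrite val_cat size_w val_v val_w mulnDl addnAC -divn_eq mulnC.
rewrite xl_eq x_eq; apply: iff_trans (iff_sym (accepts _)) (iff_trans _ (accepts _)).
rewrite /accepted !run_cat (uniform _ (run q0 v)) ?size_w //.
- by apply: (run_neq_q0 no_incoming (u := u)); rewrite val_u.
- by apply: (run_neq_q0 no_incoming (u := v)); rewrite val_v addn_gt0 hi_gt0.
- by apply: val_inj; rewrite /= !pseudo_morphism_run val_u val_v modnDr.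
Qed.

End Sufficiency.

Section Necessity.
Variables (b : nat) (b_gt1 : 1 < b) (Q : finType) (delta : Q -> 'I_b -> Q).
Variables (q0 : Q) (F : pred Q) (X : nat -> Prop).
Local Notation val := (@Defs.val b).
Local Notation run := (Defs.run delta).
Local Notation zero := (Ordinal (ltnW b_gt1)).
Hypothesis minimal : minimal_dfa delta q0 F.
Hypothesis accepts : accepts_by_value delta q0 F X.
Hypothesis not_pure : ~ purely_periodic X.
Variables (p0 N0 : nat).
Hypothesis p0_gt0 : 0 < p0.
Hypothesis periodic0 : periodic_from X p0 N0.

Let bJ_gt0 J : 0 < b ^ J. Proof. by rewrite expn_gt0 ltnW. Qed.

Lemma same_state_shift u u' : run q0 u = run q0 u' ->
  forall v J, v < b ^ J -> X (val u * b ^ J + v) <-> X (val u' * b ^ J + v).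
Proof.
move=> eq_run v J lt_v; have [w [<- <-]] := exists_word_of_size b_gt1 lt_v.
apply: iff_trans (iff_sym (accepts_by_value_run_cat _ _ accepts)) _.
by rewrite eq_run; apply: accepts_by_value_run_cat.
Qed.

Lemma zero_loop_q0 : delta q0 zero = q0.
Proof.
apply: (minimal_dfa_eq minimal) => w.
exact: iff_trans (accepts_by_value_run_cat [:: zero] _ accepts) (iff_sym (accepts w)).
Qed.

(* A nonzero value [n] leading back to [q0] would make [X] invariant under
   adding [n * b ^ J] to any [v < b ^ J], hence purely periodic. *)
Lemma no_incoming_q0 s a : delta s a = q0 -> s = q0 /\ a = zero.
Proof.
move=> eq_q0; have [u eq_s] := minimal.1 s; subst s.
case: (posnP (val (rcons u a))) => [/(val_rcons_eq0 b_gt1) [val0 a0]|n_gt0].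
  by split; [apply: run_val0 val0; apply: zero_loop_q0 | apply: val_inj].
case: not_pure; apply/purely_periodicP; exists p0 => // x _.
set n := val (rcons u a); have [J lt_J] : exists J, x + p0 + N0 < b ^ J.
  by exists (x + p0 + N0); apply: ltn_expl.
have shift v : v < b ^ J -> X v <-> X (n * b ^ J + v).
  move=> lt_v; apply: iff_sym; apply: (same_state_shift (u' := [::])) => //.
  by rewrite run_rcons.
have le_nJ : b ^ J <= n * b ^ J by apply: leq_pmull.
by rewrite shift ?(shift (x + p0)) ?addnA; try apply: periodic0; lia.
Qed.

Definition scaled_period c := 0 < c /\ exists J N, periodic_from X (c * b ^ J) N.

Lemma scaled_period_p0 : scaled_period p0.
Proof. by split=> //; exists 0, N0; rewrite expn0 muln1. Qed.

Lemma scaled_period_gcd c c' :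
  scaled_period c -> scaled_period c' -> scaled_period (gcdn c c').
Proof.
move=> [c_gt0 [J [N per]]] [c'_gt0 [J' [N' per']]].
split; first by rewrite gcdn_gt0 c_gt0.
exists (J + J'), (maxn N N').
rewrite expnD muln_gcdl !mulnA [c' * _ * _]mulnAC.
apply: periodic_from_gcd; first by rewrite !muln_gt0 c_gt0 !bJ_gt0.
  by apply: periodic_from_le (leq_maxl _ _) _; apply: periodic_fromM.
by apply: periodic_from_le (leq_maxr _ _) _; apply: periodic_fromM.
Qed.

(* With [B = b ^ J > p0 + N0], every [x >= n B] is [n B + v] up to a multiple
   of [p0], with [v < p0 < B]; replacing the high digits [n] by [n'] does not
   change the state. *)
Lemma scaled_period_diff u u' : run q0 u = run q0 u' -> 0 < val u -> val u < val u' ->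
  scaled_period (val u' - val u).
Proof.
move=> eq_run n_gt0 lt_nn'; split; first by rewrite subn_gt0.
set n := val u; set n' := val u'.
have [J lt_J] : exists J, p0 + N0 < b ^ J by exists (p0 + N0); apply: ltn_expl.
set B := b ^ J in lt_J *.
exists J, (n * B) => x le_x.
set v := (x - n * B) %% p0; set t := (x - n * B) %/ p0.
have lt_v : v < p0 by rewrite ltn_pmod.
have x_eq : x = n * B + v + p0 * t.
  by have := divn_eq (x - n * B) p0; rewrite -/v -/t mulnC; lia.
have le_B : B <= n * B by apply: leq_pmull.
have le_nB : n * B <= n' * B by rewrite leq_mul2r (ltnW lt_nn') orbT.
have -> : x + (n' - n) * B = n' * B + v + p0 * t by rewrite mulnBl; lia.
rewrite x_eq -(periodic_fromM t periodic0 (x := n * B + v)); last lia.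
rewrite -(periodic_fromM t periodic0 (x := n' * B + v)); last lia.
by apply: same_state_shift => //; apply: ltn_trans lt_v _; lia.
Qed.

Lemma exists_least_scaled_period :
  exists2 k, scaled_period k & forall c, scaled_period c -> k <= c.
Proof.
have [k [[k_scaled k_least] _]] := dec_inh_nat_subset_has_unique_least_element
  scaled_period (fun c => classic _) (ex_intro _ p0 scaled_period_p0).
by exists k => // c /k_least /leP.
Qed.

Section LeastScaledPeriod.
Variable k : nat.
Hypothesis k_scaled : scaled_period k.
Hypothesis k_least : forall c, scaled_period c -> k <= c.

Let k_gt0 : 0 < k := k_scaled.1.

Lemma scaled_period_dvd c : scaled_period c -> k %| c.
Proof.
move=> c_scaled; have /eqP <- : gcdn k c == k.
  by rewrite eqn_leq dvdn_leq ?dvdn_gcdl //=; apply/k_least/scaled_period_gcd.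
exact: dvdn_gcdr.
Qed.

(* A common factor [g] of [k] and [b] could be traded for one more power of
   [b], making [k / g] a scaled period. *)
Lemma coprime_b_k : coprime b k.
Proof.
rewrite coprime_sym /coprime; set g := gcdn k b.
have g_dvd_k : g %| k := dvdn_gcdl _ _.
have g_dvd_b : g %| b := dvdn_gcdr _ _.
rewrite eqn_leq gcdn_gt0 k_gt0 andbT leqNgt; apply/negP => g_gt1.
suff /k_least : scaled_period (k %/ g) by apply/negP; rewrite -ltnNge; apply: ltn_Pdiv.
split; first by rewrite divn_gt0 ?(ltnW g_gt1) // dvdn_leq.
have [_ [J [N per]]] := k_scaled; exists J.+1, N.
have -> : k %/ g * b ^ J.+1 = k * b ^ J * (b %/ g).
  rewrite expnS -[X in X * b ^ J](divnK g_dvd_b) -[X in X * b ^ J * _](divnK g_dvd_k).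
  by move: (k %/ g) (b %/ g) (b ^ J) => K B' P; rewrite !mulnA [RHS]mulnAC [K * g * B']mulnAC.
exact: periodic_fromM.
Qed.

Lemma run_eq_modn u u' : run q0 u = run q0 u' -> 0 < val u -> 0 < val u' ->
  val u = val u' %[mod k].
Proof.
wlog lt_uu' : u u' / val u < val u'.
  move=> gen eq_run u_gt0 u'_gt0.
  case: (ltngtP (val u) (val u')) => [lt|lt|->] //; first exact: gen.
  by apply/esym; apply: gen.
move=> eq_run u_gt0 _; apply/eqP; rewrite eq_sym eqn_mod_dvd; last exact: ltnW.
exact: scaled_period_dvd (scaled_period_diff eq_run u_gt0 lt_uu').
Qed.

(* Once [size w >= J], reading [w] after [u'] instead of [u] adds to every value
   a multiple of the period [k * b ^ J], and these values exceed
   [b ^ (size w) > N]. *)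
Lemma ultimately_equivalent_modn u u' : 0 < val u -> 0 < val u' ->
  val u = val u' %[mod k] -> ultimately_equivalent delta (run q0 u) (run q0 u').
Proof.
wlog le_uu' : u u' / val u <= val u'.
  move=> gen u_gt0 u'_gt0 eq_mod; case: (leqP (val u) (val u')) => [le|/ltnW lt].
    exact: gen.
  have [m [m_gt0 ue]] := gen u' u lt u'_gt0 u_gt0 (esym eq_mod).
  by exists m; split=> // w /ue.
move=> u_gt0 _ eq_mod.
have /dvdnP [t diff] : k %| val u' - val u by rewrite -eqn_mod_dvd // eq_mod.
have [_ [J [N per]]] := k_scaled.
exists (J + N).+1; split=> // w le_w; apply: (minimal_dfa_eq minimal) => y.
rewrite -[run (run q0 u) w]run_cat -[run (run q0 u') w]run_cat.
apply: iff_trans (accepts_by_value_run_cat _ _ accepts) _.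
apply: iff_trans _ (iff_sym (accepts_by_value_run_cat _ _ accepts)); rewrite !val_cat.
have lt_w := ltn_expl (size w) b_gt1.
have bw_eq : b ^ size w = b ^ J * b ^ (size w - J) by rewrite -expnD subnKC //; lia.
have le_bw : b ^ size w <= (val u * b ^ size w + val w) * b ^ size y + val y.
  apply: leq_trans (leq_addr _ _); apply: leq_trans (leq_pmulr _ (bJ_gt0 _)).
  exact: leq_trans (leq_pmull _ u_gt0) (leq_addr _ _).
have -> : val u' = val u + t * k by lia.
move: le_bw lt_w; rewrite bw_eq => le_bw lt_w.
set A := (val u * _ + val w) * _ + val y in le_bw *.
have -> : ((val u + t * k) * (b ^ J * b ^ (size w - J)) + val w) * b ^ size y + val y =
    A + k * b ^ J * (t * b ^ (size w - J) * b ^ size y).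
  rewrite /A; move: (val u) (val w) (val y) (b ^ J) (b ^ (size w - J)) (b ^ size y).
  move=> n v z B B' C; nia.
apply: (periodic_fromM _ per); lia.
Qed.

Let reachable s : exists u, run q0 u == s.
Proof. by have [u <-] := minimal.1 s; exists u. Qed.

Definition residue (s : Q) : 'I_k :=
  Ordinal (ltn_pmod (val (xchoose (reachable s))) k_gt0).

Lemma residue_run u : residue (run q0 u) = val u %% k :> nat.
Proof.
rewrite /=; have /eqP := xchooseP (reachable (run q0 u)); move: (xchoose _) => u' run_u'.
have [val0|u_gt0] := posnP (val u).
  have /(run_q0_val0 no_incoming_q0) -> : run q0 u' = q0.
    by rewrite run_u'; apply: run_val0 val0; apply: zero_loop_q0.
  by rewrite val0.
apply: run_eq_modn => //; apply: (run_neq_q0_val_gt0 zero_loop_q0).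
by rewrite run_u'; apply: run_neq_q0 no_incoming_q0 _ u_gt0.
Qed.

Lemma residue_pseudo_morphism : pseudo_morphism delta q0 residue.
Proof.
split=> [|s a]; first by rewrite (residue_run [::]) mod0n.
have [u <-] := minimal.1 s.
by rewrite -run_rcons !residue_run val_rcons -modnDml -modnMml modnDml.
Qed.

Lemma residue_fibres_ultimately_equivalent s s' : s <> q0 -> s' <> q0 ->
  residue s = residue s' -> ultimately_equivalent delta s s'.
Proof.
have [u <-] := minimal.1 s; have [u' <-] := minimal.1 s'.
move=> /(run_neq_q0_val_gt0 zero_loop_q0) u_gt0 /(run_neq_q0_val_gt0 zero_loop_q0) u'_gt0.
move/(congr1 (@nat_of_ord k)); rewrite !residue_run.
exact: ultimately_equivalent_modn.
Qed.

Variable Z : {set Q}.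
Hypothesis Z_zero_circuit : forall s, s \in Z <-> on_zero_circuit delta zero s.

Lemma residue_inj_zero_circuit : {in Z :\ q0 &, injective residue}.
Proof.
move=> s s'; rewrite !inE => /andP [/eqP ne /Z_zero_circuit cyc].
case/andP => /eqP ne' /Z_zero_circuit cyc' /(residue_fibres_ultimately_equivalent ne ne').
exact: ultimately_equivalent_zero_circuit.
Qed.

(* Reading [E] zeros after a word of value [r + k] multiplies its value by
   [b ^ E]; a 0-circuit is eventually reached, and [E] can be taken a multiple
   of [totient k], so that [b ^ E = 1 %[mod k]]. *)
Lemma residue_onto_zero_circuit (r : 'I_k) : exists2 s, s \in Z :\ q0 & residue s = r.
Proof.
have [u val_u] := exists_word b_gt1 (r + k).
have [i0 cyc] := iter_reaches_cycle (delta^~ zero) (run q0 u).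
set E := totient k * i0.
have [c c_gt0] : exists2 c, 0 < c &
    iter c (delta^~ zero) (iter E (delta^~ zero) (run q0 u)) =
    iter E (delta^~ zero) (run q0 u).
  by apply: cyc; rewrite leq_pmull // totient_gt0.
rewrite -[iter E _ _]run_nseq -run_cat => cyc_E.
have val_E : val (u ++ nseq E zero) = (r + k) * b ^ E.
  by rewrite val_cat val_nseq0 // addn0 size_nseq val_u.
exists (run q0 (u ++ nseq E zero)).
  rewrite !inE; apply/andP; split; last by apply/Z_zero_circuit; exists c.
  apply/eqP; apply: (run_neq_q0 no_incoming_q0 (u := u ++ _)).
  by rewrite val_E muln_gt0 bJ_gt0 addn_gt0 k_gt0 orbT.
apply: ord_inj; rewrite residue_run val_E.
have b_totient : b ^ totient k = 1 %[mod k] by apply: Euler_exp_totient coprime_b_k.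
rewrite -modnMmr /E expnM -modnXm b_totient modnXm exp1n modnMmr muln1 modnDr.
exact: modn_small.
Qed.

Lemma card_zero_circuit : #|Z| = k.+1.
Proof.
have q0_Z : q0 \in Z by apply/Z_zero_circuit; exists 1; split=> //; apply: zero_loop_q0.
rewrite (cardsD1 q0) q0_Z -(card_in_imset residue_inj_zero_circuit).
suff -> : residue @: (Z :\ q0) = [set: 'I_k] by rewrite cardsT card_ord.
apply/setP => r; rewrite in_setT; have [s Zs <-] := residue_onto_zero_circuit r.
exact: imset_f.
Qed.

End LeastScaledPeriod.

Lemma exists_pseudo_morphism (Z : {set Q}) (l : nat) :
  (forall s, s \in Z <-> on_zero_circuit delta zero s) -> #|Z| = l.+1 ->
  exists phi : Q -> 'I_l, pseudo_morphism delta q0 phi /\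
    (forall s s', s <> q0 -> s' <> q0 -> phi s = phi s' -> ultimately_equivalent delta s s').
Proof.
move=> Z_zero_circuit card_Z; have [k k_scaled k_least] := exists_least_scaled_period.
have k_eq : k = l by apply: succn_inj; rewrite -card_Z (card_zero_circuit k_scaled k_least).
subst l; exists (residue k_scaled); split.
  exact: residue_pseudo_morphism.
exact: residue_fibres_ultimately_equivalent.
Qed.

End Necessity.

Theorem theorem44 (b : nat) (hb : 1 < b) (Q : finType) (q0 : Q)
    (delta : Q -> 'I_b -> Q) (F : pred Q) (Z : {set Q}) (l : nat) :
  minimal_dfa delta q0 F ->
  (forall s : Q, s \in Z <-> on_zero_circuit delta (Ordinal (ltnW hb)) s) ->
  #|Z| = l.+1 ->
  (exists X : nat -> Prop, accepts_by_value delta q0 F X /\ impurely_periodic X)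
  <->
  ((exists phi : Q -> 'I_l,
      pseudo_morphism delta q0 phi /\
      (forall s s' : Q, s <> q0 -> s' <> q0 -> phi s = phi s' ->
         ultimately_equivalent delta s s')) /\
   (delta q0 (Ordinal (ltnW hb)) = q0 /\
    forall (s : Q) (a : 'I_b), delta s a = q0 -> s = q0 /\ a = Ordinal (ltnW hb))).
Proof.
move=> minimal Z_zero_circuit card_Z; split.
  move=> [X [accepts [[p0 [N0 [p0_gt0 periodic0]]] not_pure]]].
  split; [|split].
  - exact (exists_pseudo_morphism minimal accepts not_pure p0_gt0 periodic0
             Z_zero_circuit card_Z).
  - exact (zero_loop_q0 hb minimal accepts).
  - exact (no_incoming_q0 hb minimal accepts not_pure p0_gt0 periodic0).
move=> [[phi [morphism fibres]] [zero_loop no_incoming]].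
have accepts := accepts_accepted_values F zero_loop.
exists (accepted_values delta q0 F); split=> //; split.
  exact (eventually_periodic_of_pseudo_morphism accepts no_incoming morphism fibres).
exact (not_purely_periodic accepts no_incoming minimal).
Qed.
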